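(* Let $F$ be a finite field of characteristic $3$. Let $k\ge 0$ be an integer, $m=3k+1$, and $t$ an integer with $t^3\equiv 1\pmod m$ and $\gcd(m,t-1)=1$. Let $G=T_{3m}=\langle x,y\mid x^m=y^3=1,\ y^{-1}xy=x^t\rangle$ (of order $3m$) and let $FG$ be its group algebra over $F$. Let $s\in FG$ be the sum of all elements of $G$ whose order is a power of $3$ (including the identity). Then $$\{\alpha\in FG \mid \alpha s=s\alpha=0\}=\{a^-\hat{x}y^{-1}+a\hat{x}+a^+\hat{x}y \mid a^-,a,a^+\in F,\ a^-+a+a^+=0\}.$$
   Context: $\hat{x}=\sum_{i=0}^{m-1}x^i\in FG$, and for $g\in G$, $\hat{x}g=\sum_{i=0}^{m-1}x^ig$. *)

From HB Require Import structures.
From mathcomp Require Import all_boot all_order all_algebra all_fingroup pgroup.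
Set Implicit Arguments. Unset Strict Implicit. Unset Printing Implicit Defensive.
Import GRing.Theory.
Local Open Scope ring_scope.

(* The group algebra F[G] of a finite group G (a subgroup of gT) is modelled
   as functions gT -> F supported on G; addition and scaling are pointwise. *)
Section GroupAlgebra.
Variables (F : fieldType) (gT : finGroupType).

Definition in_galg (G : {set gT}) (alpha : {ffun gT -> F}) : Prop :=
  forall g, g \notin G -> alpha g = 0.

Definition gscale (c : F) (a : {ffun gT -> F}) : {ffun gT -> F} :=
  [ffun g => c * a g].

Definition gdelta (g0 : gT) : {ffun gT -> F} := [ffun g => (g == g0)%:R].

Definition gmul (G : {set gT}) (a b : {ffun gT -> F}) : {ffun gT -> F} :=
  [ffun g => \sum_(h in G) a h * b ((h^-1 * g)%g)].

Definition psum (p : nat) (G : {set gT}) : {ffun gT -> F} :=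
  \sum_(g in G | (p.-elt g)%g) gdelta g.

Definition ghat (x : gT) (m : nat) : {ffun gT -> F} :=
  \sum_(i < m) gdelta (x ^+ i)%g.
End GroupAlgebra.

From HB Require Import structures.
From mathcomp Require Import all_boot all_order all_algebra all_fingroup pgroup.
From mathcomp Require Import cyclic zify.
(* Write X = <[x]>, s for the sum of the 3-elements and e(alpha) for the
   augmentation of alpha.  For u in X one has (u y)^3 = u^(1 + t + t^2) = 1,
   while |X| = m is prime to 3, so the 3-elements of G are 1 and the elements
   outside X: s = 1 + G^ - X^, whence s alpha = alpha + e(alpha) G^ - X^ alpha.
   If s alpha = 0, evaluating at the points of X and summing, with |X| = 1 in
   F, gives e(alpha) = 0; then alpha = X^ alpha is constant on the right cosets
   X y^-1, X, X y, which exhaust G.  Conversely such an alpha with e(alpha) = 0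
   satisfies X^ alpha = alpha X^ = |X| alpha = alpha (X is normal), so s kills
   it on both sides. *)

Set Implicit Arguments.
Unset Strict Implicit.
Unset Printing Implicit Defensive.
Import GRing.Theory.

Lemma dvdn_cyclotomic3 m t :
  t ^ 3 = 1 %[mod m] -> coprime m (t - 1) -> m %| t ^ 2 + t + 1.
Proof.
move=> t3 cop_m; have [t0 | t_gt0] := posnP t.
  by move: cop_m; rewrite t0 /coprime gcdn0 => /eqP->.
have factor3 : t ^ 3 - 1 = (t - 1) * (t ^ 2 + t + 1).
  by rewrite !expnS expn0 !muln1; nia.
move/eqP: t3; rewrite eqn_mod_dvd ?expn_gt0 ?t_gt0 // factor3.
by rewrite Gauss_dvdr.
Qed.

Local Open Scope ring_scope.

Section GroupTranslation.
Variables (R : nmodType) (gT : finGroupType) (G : {group gT}) (f : gT -> R).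

Lemma sum_mulgV g : g \in G -> \sum_(a in G) f (g * a^-1)%g = \sum_(a in G) f a.
Proof.
move=> Gg; rewrite (reindex_inj (h := fun a => a^-1 * g)%g); last first.
  by move=> a b /mulIg /invg_inj.
by apply: eq_big => [a | a _] /=; rewrite ?groupMr ?groupV // invMg invgK mulKVg.
Qed.

Lemma sum_Vmulg g : g \in G -> \sum_(a in G) f (a^-1 * g)%g = \sum_(a in G) f a.
Proof.
move=> Gg; rewrite (reindex_inj (h := fun a => g * a^-1)%g); last first.
  by move=> a b /mulgI /invg_inj.
by apply: eq_big => [a | a _] /=; rewrite ?groupMl ?groupV // invMg invgK mulgKV.
Qed.

End GroupTranslation.

Section GroupAlgebraCalculus.
Variables (F : fieldType) (gT : finGroupType) (G : {group gT}).
Implicit Types (alpha beta : {ffun gT -> F}) (A : {set gT}) (g z : gT).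

Definition gind A : {ffun gT -> F} := [ffun g => (g \in A)%:R].

Definition gaug alpha : F := \sum_(g in G) alpha g.

Definition mull_invariant (X : {set gT}) (f : gT -> F) :=
  forall u g, u \in X -> f (u * g)%g = f g.

Definition mulr_invariant (X : {set gT}) (f : gT -> F) :=
  forall u g, u \in X -> f (g * u)%g = f g.

Lemma sum_gdelta (P : pred gT) : \sum_(g | P g) gdelta F g = [ffun w => (P w)%:R].
Proof.
apply/ffunP => w; rewrite sum_ffunE !ffunE.
under eq_bigr do rewrite ffunE.
rewrite big_mkcond (bigD1 w) //= eqxx big1 ?addr0 => [|g /negbTE]; first by case: (P w).
by rewrite eq_sym => ->; case: (P g).
Qed.

Lemma psumE p : psum F p G = gind [set g in G | (p.-elt g)%g].
Proof. by rewrite /psum sum_gdelta; apply/ffunP => g; rewrite !ffunE inE. Qed.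

Lemma ghat_cycle x : ghat F x #[x]%g = gind <[x]>%g.
Proof.
rewrite /ghat; apply/ffunP => g; rewrite sum_ffunE !ffunE.
under eq_bigr do rewrite ffunE.
case: (boolP (g \in <[x]>%g)) => [/cyclePmin[i lt_i ->] | xNg]; last first.
  by rewrite big1 // => i _; case: eqP => // gx; rewrite gx mem_cycle in xNg.
rewrite (bigD1 (Ordinal lt_i)) //= eqxx big1 ?addr0 // => j /negbTE neq_ij.
by rewrite (eq_expg_ord (Ordinal lt_i) j) // eq_sym neq_ij.
Qed.

Lemma gind_supp A : A \subset G -> in_galg G (gind A).
Proof.
move=> sAG g Gg; rewrite ffunE.
by have /negbTE-> : g \notin A by apply: contra Gg; apply: (subsetP sAG).
Qed.

Lemma gaug_gind A : A \subset G -> gaug (gind A) = #|A|%:R.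
Proof.
move=> sAG; rewrite /gaug -sumr_const [RHS]big_mkcond [LHS]big_mkcond /=.
apply: eq_bigr => g _; rewrite ffunE.
by case: (boolP (g \in A)) => [/(subsetP sAG)-> | _]; last by case: (g \in G).
Qed.

Lemma gaugD alpha beta : gaug (alpha + beta) = gaug alpha + gaug beta.
Proof. by rewrite /gaug -big_split; apply: eq_bigr => g _; rewrite ffunE. Qed.

Lemma gaugZ c alpha : gaug (gscale c alpha) = c * gaug alpha.
Proof. by rewrite /gaug mulr_sumr; apply: eq_bigr => g _; rewrite ffunE. Qed.

Lemma gmul_gindr alpha A g : in_galg G alpha ->
  gmul G alpha (gind A) g = \sum_(a in A) alpha (g * a^-1)%g.
Proof.
move=> supp; rewrite ffunE big_mkcond /=.
rewrite (reindex_inj (h := fun a => g * a^-1)%g); last first.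
  by move=> a b /mulgI /invg_inj.
rewrite [RHS]big_mkcond; apply: eq_bigr => a _ /=.
rewrite ffunE invMg invgK mulgKV mulr_natr mulrb.
by case: (boolP (_ \in G)) => // /supp ->; case: (a \in A).
Qed.

Lemma gmul_gindl A beta g : A \subset G ->
  gmul G (gind A) beta g = \sum_(a in A) beta (a^-1 * g)%g.
Proof.
move=> sAG; rewrite ffunE; under eq_bigr do rewrite ffunE mulr_natl mulrb.
by rewrite -big_mkcondr; apply: eq_bigl => a; rewrite andb_idl // => /(subsetP sAG).
Qed.

Lemma gdelta_gind z : gdelta F z = gind [set z].
Proof. by apply/ffunP => g; rewrite !ffunE inE. Qed.

Lemma gmul_gind_gdelta A z : A \subset G ->
  gmul G (gind A) (gdelta F z) = gind (A :* z)%g.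
Proof.
move=> sAG; apply/ffunP => g.
by rewrite gdelta_gind (gmul_gindr _ _ (gind_supp sAG)) big_set1 !ffunE mem_rcoset.
Qed.

End GroupAlgebraCalculus.

Section Annihilator.
Variables (F : fieldType) (gT : finGroupType) (G X : {group gT}).
Hypotheses (sXG : X \subset G) (cardX1 : #|X|%:R = 1 :> F).
Implicit Types (alpha beta : {ffun gT -> F}) (g : gT).
Local Notation S := (1 |: (G :\: X))%g.

Lemma sub_setU1_compl : S \subset G.
Proof. by rewrite subUset sub1set group1 subsetDl. Qed.

Lemma sum_setU1_compl (f : gT -> F) :
  \sum_(a in S) f a = f 1%g + \sum_(a in G) f a - \sum_(a in X) f a.
Proof.
rewrite big_setU1 ?inE ?group1 ?andbF //= [\sum_(a in G) _](big_setID X) /=.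
by rewrite (setIidPr sXG) (addrC (\sum_(i in X) f i)) addrA addrK.
Qed.

Lemma sum_const_cardX (c : F) : \sum_(u in X) c = c.
Proof. by rewrite sumr_const -mulr_natr cardX1 mulr1. Qed.

Lemma gmull_gind_compl beta g : g \in G ->
  gmul G (gind F S) beta g = beta g + gaug G beta - \sum_(u in X) beta (u^-1 * g)%g.
Proof.
move=> Gg; rewrite gmul_gindl ?sub_setU1_compl // sum_setU1_compl.
by rewrite invg1 mul1g (sum_Vmulg beta Gg).
Qed.

Lemma gmulr_gind_compl alpha g : in_galg G alpha -> g \in G ->
  gmul G alpha (gind F S) g = alpha g + gaug G alpha - \sum_(u in X) alpha (g * u^-1)%g.
Proof.
move=> supp Gg; rewrite gmul_gindr // sum_setU1_compl.
by rewrite invg1 mulg1 (sum_mulgV alpha Gg).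
Qed.

Lemma gmull_gind_compl_eq0 beta : in_galg G beta ->
  gaug G beta = 0 -> mull_invariant X beta -> gmul G (gind F S) beta = 0.
Proof.
move=> supp aug0 inv; apply/ffunP => g; rewrite [RHS]ffunE.
have [Gg | GNg] := boolP (g \in G).
  rewrite gmull_gind_compl // aug0 addr0.
  under eq_bigr => u Xu do rewrite inv ?groupV //.
  by rewrite sum_const_cardX subrr.
rewrite gmul_gindl ?sub_setU1_compl // big1 // => a /(subsetP sub_setU1_compl) Ga.
by apply: supp; rewrite groupMl ?groupV.
Qed.

Lemma gmulr_gind_compl_eq0 alpha : in_galg G alpha ->
  gaug G alpha = 0 -> mulr_invariant X alpha -> gmul G alpha (gind F S) = 0.
Proof.
move=> supp aug0 inv; apply/ffunP => g; rewrite [RHS]ffunE.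
have [Gg | GNg] := boolP (g \in G).
  rewrite gmulr_gind_compl // aug0 addr0.
  under eq_bigr => u Xu do rewrite inv ?groupV //.
  by rewrite sum_const_cardX subrr.
rewrite gmul_gindr // big1 // => a /(subsetP sub_setU1_compl) Ga.
by apply: supp; rewrite groupMr ?groupV.
Qed.

Lemma gmull_gind_compl_eq0_invariant beta : in_galg G beta ->
  gmul G (gind F S) beta = 0 -> gaug G beta = 0 /\ mull_invariant X beta.
Proof.
move=> supp Sbeta0.
pose B g := \sum_(u in X) beta (u^-1 * g)%g.
have B_inv : mull_invariant X B.
  move=> v g Xv; rewrite /B (reindex_inj (mulgI v)).
  by apply: eq_big => [u | u _] /=; [exact: groupMl | rewrite invMg -mulgA mulKg].
have betaB g : g \in G -> beta g + gaug G beta = B g.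
  by move=> Gg; apply/eqP; rewrite -subr_eq0 -gmull_gind_compl // Sbeta0 ffunE.
have aug0 : gaug G beta = 0.
  have B1 : B 1%g = \sum_(u in X) beta u.
    rewrite /B (reindex_inj invg_inj) /=.
    by apply: eq_big => [u | u _]; rewrite ?groupV // invgK mulg1.
  have : \sum_(u in X) (beta u + gaug G beta) = \sum_(u in X) beta u.
    transitivity (\sum_(u in X) B 1%g); last by rewrite sum_const_cardX B1.
    by apply: eq_bigr => u Xu; rewrite betaB ?(subsetP sXG) // -{1}[u]mulg1 B_inv.
  rewrite big_split sum_const_cardX /= => E.
  by apply: (addrI (\sum_(u in X) beta u)); rewrite addr0.
split=> // u g Xu; have Gu := subsetP sXG u Xu.
have [Gg | GNg] := boolP (g \in G).
  by rewrite -[beta (u * g)%g]addr0 -[beta g]addr0 -aug0 !betaB ?B_inv ?groupMl.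
by rewrite !supp ?groupMl.
Qed.

End Annihilator.

Section T3m.
Variables (gT : finGroupType) (G : {group gT}) (x y : gT) (m t : nat).
Hypotheses (xm : (x ^+ m = 1)%g) (y3 : (y ^+ 3 = 1)%g) (xy : (x ^ y = x ^+ t)%g).
Hypotheses (defG : G :=: <<[set x; y]>>%g) (cardG : #|G| = (3 * m)%N).
Local Notation X := <[x]>%G.
Local Open Scope group_scope.

Lemma T3m_sub : X \subset G.
Proof. by rewrite cycle_subG defG mem_gen // !inE eqxx. Qed.

Lemma T3m_memy : y \in G.
Proof. by rewrite defG mem_gen // !inE eqxx orbT. Qed.

Lemma T3m_norm : y \in 'N(X).
Proof. by rewrite inE -cycleJ xy cycleX. Qed.

Lemma T3m_conj u : u \in X -> u ^ y = u ^+ t.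
Proof. by case/cycleP=> i ->; rewrite conjXg xy -!expgM mulnC. Qed.

Lemma T3m_yV : y^-1 = y ^+ 2.
Proof. by apply/eqP; rewrite eq_invg_mul -expgS y3. Qed.

Lemma T3m_mul : G \subset X * <[y]>.
Proof.
rewrite -norm_joinEr ?cycle_subG ?T3m_norm // defG genS //.
by apply/subsetP => g; rewrite !inE => /orP[]/eqP->; rewrite ?cycle_id ?orbT.
Qed.

Lemma T3m_card : #|X| = m.
Proof.
have m_gt0 : (0 < m)%N by move: (cardG_gt0 G); rewrite cardG muln_gt0.
have le_Xm : (#|X| <= m)%N by rewrite -orderE dvdn_leq // order_dvdn xm.
have le_Y3 : (#|<[y]>| <= 3)%N by rewrite -orderE dvdn_leq // order_dvdn y3.
have le_G : (3 * m <= #|X| * #|<[y]>|)%N.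
  rewrite -cardG (leq_trans (subset_leq_card T3m_mul)) //.
  by rewrite mul_cardG leq_pmulr ?cardG_gt0.
nia.
Qed.

Lemma T3m_notin : y \notin X.
Proof.
apply/negP => Xy; have := subset_leq_card T3m_mul.
rewrite mulGSid ?cycle_subG // T3m_card cardG.
by have := cardG_gt0 X; rewrite T3m_card; lia.
Qed.

Lemma T3m_expgy_mem n : (y ^+ n \in X) = (3 %| n)%N.
Proof.
rewrite -(expg_mod _ y3) /dvdn; have : (n %% 3 < 3)%N by rewrite ltn_mod.
case: (n %% 3)%N => [|[|[|//]]] _; rewrite ?group1 ?expg1 ?(negbTE T3m_notin) //.
by rewrite -T3m_yV groupV (negbTE T3m_notin).
Qed.

Lemma T3m_decomp g : g \in G ->
  exists2 u, u \in X & exists2 j, (j < 3)%N & g = u * y ^+ j.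
Proof.
case/(subsetP T3m_mul)/mulsgP=> u v Xu /cyclePmin[j lt_j ->] ->.
exists u => //; exists j => //.
by apply: leq_trans lt_j _; rewrite dvdn_leq // order_dvdn y3.
Qed.

Lemma T3m_expg3_mulr (m_dvd : (m %| t ^ 2 + t + 1)%N) u :
  u \in X -> (u * y) ^+ 3 = 1.
Proof.
move=> Xu; have yV2 : y^-1 * y^-1 = y by rewrite T3m_yV -expgD expgS y3 mulg1.
have -> : (u * y) ^+ 3 = u * (u ^ y^-1) * (u ^ y).
  by rewrite !conjgE invgK !expgS expg0 mulg1 !mulgA -(mulgA _ y^-1 y^-1) yV2.
rewrite T3m_yV expgS expg1 conjgM !T3m_conj ?groupX // -expgM -expgS -expgD.
apply/eqP; rewrite -order_dvdn (dvdn_trans (order_dvdG Xu)) // T3m_card.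
by rewrite (_ : _ + _ = t ^ 2 + t + 1)%N // expnS expn1; lia.
Qed.

Lemma T3m_expg3 (m_dvd : (m %| t ^ 2 + t + 1)%N) g :
  g \in G -> g \notin X -> g ^+ 3 = 1.
Proof.
case/T3m_decomp=> u Xu [[|[|[|//]]] _ ->]; rewrite ?expg1 ?T3m_expg3_mulr //.
  by rewrite mulg1 Xu.
move=> _; apply/eqP; rewrite -invg_eq1 -expVgn.
have -> : (u * y ^+ 2)^-1 = (u^-1 ^ y^-1) * y.
  by rewrite -T3m_yV invMg invgK conjgE invgK mulgA mulgKV.
by rewrite T3m_expg3_mulr // memJ_norm ?groupV ?T3m_norm.
Qed.

Lemma T3m_pelts (m_dvd : (m %| t ^ 2 + t + 1)%N) (m_mod3 : ~~ (3 %| m)%N) :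
  [set g in G | 3.-elt g] = 1 |: (G :\: X).
Proof.
apply/setP => g; rewrite !inE.
have [Gg | GNg] := boolP (g \in G); last first.
  by rewrite andbF orbF; case: eqP GNg => // ->; rewrite group1.
rewrite andbT /=; have [Xg | XNg] := boolP (g \in X); last first.
  by rewrite orbT; apply: pnat_dvd (pnat_id (isT : prime 3)); rewrite order_dvdn T3m_expg3.
rewrite orbF; apply/idP/eqP => [elt_g | ->]; last exact: p_elt1.
apply/eqP; rewrite -order_eq1; apply/eqP/(pnat_1 elt_g).
by rewrite (pnat_dvd (order_dvdG Xg)) // T3m_card p'natE.
Qed.

Local Open Scope ring_scope.
Variable F : fieldType.

Definition coset_comb (am a ap : F) : {ffun gT -> F} :=
  gscale am (gind F (X :* y^-1)%g) + gscale a (gind F X) + gscale ap (gind F (X :* y)%g).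

Lemma coset_combE am a ap g : coset_comb am a ap g =
  am * ((g * y)%g \in X)%:R + a * (g \in X)%:R + ap * ((g * y^-1)%g \in X)%:R.
Proof. by rewrite !ffunE !mem_rcoset invgK. Qed.

Lemma coset_comb_supp am a ap : in_galg G (coset_comb am a ap).
Proof.
move=> g GNg; have XN h : h \notin G -> (h \in X) = false.
  by move=> GNh; apply: contraNF GNh; apply: (subsetP T3m_sub).
by rewrite coset_combE !XN ?mulr0 ?addr0 // groupMr ?groupV ?T3m_memy.
Qed.

Lemma coset_comb_mull_invariant am a ap : mull_invariant X (coset_comb am a ap).
Proof. by move=> u g Xu; rewrite !coset_combE -!mulgA !(groupMl _ Xu). Qed.

Lemma coset_comb_mulr_invariant am a ap : mulr_invariant X (coset_comb am a ap).
Proof.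
move=> u g Xu.
have mulgJ z : (g * u * z = g * z * u ^ z)%g by rewrite conjgE !mulgA mulgK.
have XuJ z : z \in 'N(X)%g -> (u ^ z \in X)%g by move=> Nz; rewrite memJ_norm.
rewrite !coset_combE !mulgJ (groupMr _ Xu).
by rewrite !(groupMr _ (XuJ _ _)) ?groupV ?T3m_norm.
Qed.

Lemma gaug_coset_comb am a ap : gaug G (coset_comb am a ap) = (am + a + ap) * #|X|%:R.
Proof.
have sXzG z : z \in G -> (X :* z)%g \subset G.
  by move=> Gz; rewrite mul_subG ?sub1set ?T3m_sub.
rewrite !gaugD !gaugZ !gaug_gind ?card_rcoset ?sXzG ?groupV ?T3m_memy ?T3m_sub //.
by rewrite -!mulrDl.
Qed.

Lemma T3m_coset_comb beta : in_galg G beta -> mull_invariant X beta ->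
  beta = coset_comb (beta y^-1%g) (beta 1%g) (beta y).
Proof.
move=> supp inv; apply/ffunP => g.
have [Gg | GNg] := boolP (g \in G); last by rewrite (supp g GNg) coset_comb_supp.
case/T3m_decomp: Gg => u Xu [j lt_j3 ->]; rewrite inv // coset_combE.
rewrite -!mulgA !(groupMl _ Xu) -expgSr T3m_yV -expgD !T3m_expgy_mem.
by case: j lt_j3 => [|[|[|//]]] _; rewrite /= ?mulr0 ?mulr1 ?addr0 ?add0r ?expg1.
Qed.

End T3m.

Theorem proposition3p2 (F : finFieldType) (hF : 3%N \in [pchar F])
    (gT : finGroupType) (G : {group gT}) (x y : gT) (k t : nat)
    (hx : (x ^+ (3 * k + 1) = 1)%g) (hy : (y ^+ 3 = 1)%g)
    (hrel : (x ^ y = x ^+ t)%g)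
    (hG : G :=: <<[set x; y]>>%g) (hcard : #|G| = (3 * (3 * k + 1))%N)
    (ht3 : (t ^ 3 = 1 %[mod 3 * k + 1])%N)
    (htcop : coprime (3 * k + 1) (t - 1))
    (alpha : {ffun gT -> F}) (halpha : in_galg G alpha) :
  (gmul G alpha (psum F 3 G) = 0 /\ gmul G (psum F 3 G) alpha = 0) <->
  (exists am a ap : F, am + a + ap = 0 /\
     alpha = gscale am (gmul G (ghat F x (3 * k + 1)) (gdelta F (y^-1)%g))
             + gscale a (ghat F x (3 * k + 1))
             + gscale ap (gmul G (ghat F x (3 * k + 1)) (gdelta F y))).
Proof.
set m := (3 * k + 1)%N in hx hcard ht3 htcop *.
have m_dvd := dvdn_cyclotomic3 ht3 htcop.
have m_mod3 : ~~ (3 %| m)%N by rewrite /m dvdn_addr ?dvdn_mulr.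
have sXG := T3m_sub hG.
have cardX := T3m_card hx hy hrel hG hcard.
have cardX1 : #|<[x]>%g|%:R = 1 :> F.
  by rewrite cardX /m natrD natrM (pcharf0 hF) mul0r add0r.
have -> : m = #[x]%g by rewrite orderE cardX.
rewrite psumE (T3m_pelts hx hy hrel hG hcard m_dvd m_mod3) ghat_cycle.
rewrite !gmul_gind_gdelta //.
split=> [[_ /(gmull_gind_compl_eq0_invariant sXG cardX1 halpha) [aug0 inv]] |
         [am [a [ap [sum0 ->]]]]].
  have expand := T3m_coset_comb hx hy hrel hG hcard halpha inv.
  exists (alpha y^-1%g), (alpha 1%g), (alpha y); split=> //.
  by rewrite expand gaug_coset_comb // cardX1 mulr1 in aug0.
have aug0 : gaug G (coset_comb x y am a ap) = 0.
  by rewrite gaug_coset_comb // cardX1 mulr1.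
have supp := coset_comb_supp hG am a ap.
split.
  exact: gmulr_gind_compl_eq0 supp aug0 (coset_comb_mulr_invariant hrel am a ap).
exact: gmull_gind_compl_eq0 supp aug0 (coset_comb_mull_invariant y am a ap).
Qed.
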